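(* Let $T=\{0,\dots,N\}$ and $\mathbb{F}$ a field. Let $C_\bullet$ and $C'_\bullet$ be filtrations (indexed by $T$) of finite-dimensional chain complexes $C=C_N$ and $C'=C'_N$ over $\mathbb{F}$, with filtration compatible ordered bases $\mathfrak{C}=(c_1,\dots,c_n)$ and $\mathfrak{C}'=(c'_1,\dots,c'_n)$ and corresponding filtration boundary matrices $D$ and $D'$. Let $\varphi_\bullet\colon C_\bullet\to C'_\bullet$ be an injective morphism of filtrations of chain complexes such that $\varphi=\varphi_N\colon C\to C'$ is an isomorphism, let $F$ be the matrix of $\varphi$ with respect to $\mathfrak{C}$ and $\mathfrak{C}'$, and set $D^{\varphi}=DF^{-1}=F^{-1}D'$. Suppose $V$ and $V^{\varphi}$ are invertible upper-triangular $n\times n$ matrices such that $R=DV$ and $R^{\varphi}=D^{\varphi}V^{\varphi}$ are reduced. Interpret the columns of $R$, $D$, $V$, $R^\varphi$, $D^\varphi$ as coordinate vectors (hence elements of $C$) with respect to $\mathfrak{C}$, and the columns of $V^{\varphi}$ as coordinate vectors (elements of $C'$) with respect to $\mathfrak{C}'$. Then the persistence module $\operatorname{im}H_*(\varphi_\bullet)$, $t\mapsto\operatorname{im}\big(H_*(\varphi_t)\colon H_*(C_t)\to H_*(C'_t)\big)$, has a barcode given by the multiset union \[ \left\{\operatorname{supp}_{C_\bullet}(r^{\varphi}_j)\setminus\operatorname{supp}_{C'_\bullet}(v^{\varphi}_j)\;\middle|\; r^{\varphi}_j\neq 0,\ \operatorname{supp}_{C_\bullet}(r^{\varphi}_j)\setminus\operatorname{supp}_{C'_\bullet}(v^{\varphi}_j)\neq\emptyset\right\}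 \cup \left\{\operatorname{supp}_{C_\bullet}(v_i)\;\middle|\; r_i=0 \text{ and } i\notin\operatorname{pivs}R^{\varphi}\right\}. \]
   Context: A chain complex here is a finite-dimensional graded $\mathbb{F}$-vector space with a differential $\partial$ of degree $-1$ with $\partial^2=0$. A filtration of a vector space $M$ indexed by $T$ is a chain of subspaces $M_0\subseteq\dots\subseteq M_N=M$; a filtration of chain complexes is such a chain of subcomplexes. The support of $m\in M$ is $\operatorname{supp}_{M_\bullet}(m)=\{t\in T\mid m\in M_t\}$. A basis $\mathfrak{M}$ of $M$ is filtration compatible if $\mathfrak{M}\cap M_t$ is a basis of $M_t$ for all $t$; an ordered basis is a filtration compatible ordered basis if it is filtration compatible and $m\le m'$ implies $\operatorname{supp}(m')\subseteq\operatorname{supp}(m)$. The filtration boundary matrix is the matrix of $\partial$ on $C$ in the given filtration compatible ordered basis. For a matrix $X$, $x_j$ denotes its $j$-th column; for a nonzero column $x_j$, $\operatorname{piv}x_j$ is the largest row index of a nonzero entry; $\operatorname{pivs}X$ is the set of pivots of nonzero columns of $X$; $X$ is reduced if no two nonzero columns have the same pivot. A persistence module indexed by $T$ (a functor from the poset $T$ to $\mathbb{F}$-vector spaces) has barcode $(I_\alpha)$ (a multiset of intervals of $T$) if it is isomorphic to $\bigoplus_\alpha C(I_\alpha)$, where the interval module $C(I)$ is $\mathbb{F}$ at $t\in I$, $0$ otherwise, with identity structure maps within $I$ and zero otherwise. *)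

From HB Require Import structures.
From mathcomp Require Import all_boot all_order all_algebra.
Set Implicit Arguments. Unset Strict Implicit. Unset Printing Implicit Defensive.
Import Order.TTheory GRing.Theory Num.Theory.
Local Open Scope ring_scope.

(* Index poset T = {0,...,N} is 'I_N.+1.  A chain complex with an ordered
   basis (c_1..c_n) is modelled on coordinate column vectors 'cV[F]_n; the
   differential is x |-> D *m x, D the boundary matrix (columns = images of
   basis vectors).  deg i : int is the degree of the homogeneous basis
   element c_i.  A filtration compatible ordered basis is described by the
   birth times b i = min supp(c_i); then C_t = span{c_i | b i <= t}. *)

Section Defs.
Variable F : fieldType.

Definition inFilt (n N : nat) (b : 'I_n -> 'I_N.+1) (t : 'I_N.+1)
  (x : 'cV[F]_n) : bool := [forall i, (t < b i)%N ==> (x i 0 == 0)].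

Definition supp (n N : nat) (b : 'I_n -> 'I_N.+1) (x : 'cV[F]_n)
  : {set 'I_N.+1} := [set t | inFilt b t x].

Definition homog (n : nat) (deg : 'I_n -> int) (k : int) (x : 'cV[F]_n) : Prop :=
  forall i, x i 0 != 0 -> deg i = k.

Definition filt_chain_complex (n N : nat) (D : 'M[F]_n) (deg : 'I_n -> int)
  (b : 'I_n -> 'I_N.+1) : Prop :=
  [/\ D *m D = 0,
      (forall k x, homog deg k x -> homog deg (k - 1) (D *m x)),
      (forall t x, inFilt b t x -> inFilt b t (D *m x)) &
      (forall i j : 'I_n, (i <= j)%N -> (b i <= b j)%N)].

Definition filt_chain_map (n N : nat) (D D' Fm : 'M[F]_n)
  (deg deg' : 'I_n -> int) (b b' : 'I_n -> 'I_N.+1) : Prop :=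
  [/\ Fm *m D = D' *m Fm,
      (forall k x, homog deg k x -> homog deg' k (Fm *m x)) &
      (forall t x, inFilt b t x -> inFilt b' t (Fm *m x))].

Definition upper_triangular (n : nat) (V : 'M[F]_n) : Prop :=
  forall i j : 'I_n, (j < i)%N -> V i j = 0.

Definition is_piv (n : nat) (X : 'M[F]_n) (j i : 'I_n) : bool :=
  (X i j != 0) && [forall i' : 'I_n, (i < i')%N ==> (X i' j == 0)].

Definition pivs (n : nat) (X : 'M[F]_n) : {set 'I_n} :=
  [set i | [exists j, is_piv X j i]].

Definition reduced (n : nat) (X : 'M[F]_n) : Prop :=
  forall j1 j2 i, is_piv X j1 i -> is_piv X j2 i -> j1 = j2.

Definition is_interval (N : nat) (I : {set 'I_N.+1}) : Prop :=
  forall s u t : 'I_N.+1, (s <= u)%N -> (u <= t)%N -> s \in I -> t \in I -> u \in I.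

(* The persistence module t |-> (A t + B t) / B t, a subquotient of the fixed
   ambient space 'cV_m, with structure maps (s <= t) induced by the identity
   of the ambient space, has barcode bars, i.e. it is isomorphic to
   (+)_a C(bars_a).  Unfolded: an isomorphism from (+)_a C(I_a) is given by
   the images [y a t] (classes mod B t) of the generators of the summands
   C(I_a)_t = F, t \in I_a; these must form a basis of (A t + B t)/B t and
   be compatible with the structure maps. *)
Definition subquot_has_barcode (m N : nat) (A B : 'I_N.+1 -> 'cV[F]_m -> Prop)
  (bars : seq {set 'I_N.+1}) : Prop :=
  (forall a, a \in bars -> is_interval a) /\
  exists y : 'I_(size bars) -> 'I_N.+1 -> 'cV[F]_m,
  [/\
      (forall (a : 'I_(size bars)) t, t \in nth set0 bars a ->
          exists u v, [/\ A t u, B t v & y a t = u + v]),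
      (forall t (c : 'I_(size bars) -> F),
          B t (\sum_(a : 'I_(size bars) | t \in nth set0 bars a) c a *: y a t) ->
          forall a : 'I_(size bars), t \in nth set0 bars a -> c a = 0),
      (forall t u v, A t u -> B t v ->
          exists c : 'I_(size bars) -> F,
            B t (u + v - \sum_(a : 'I_(size bars) | t \in nth set0 bars a) c a *: y a t)) &
      (forall (a : 'I_(size bars)) (s t : 'I_N.+1), (s <= t)%N -> s \in nth set0 bars a ->
          if t \in nth set0 bars a then B t (y a s - y a t) else B t (y a s))].

(* the image persistence module im H_*(phi_.) as subquotient of C':
   im H_*(phi_t) = (phi(Z_t) + B'_t)/B'_t, Z_t cycles of C_t, B'_t
   boundaries of C'_t. *)
Definition im_cycles (n N : nat) (D Fm : 'M[F]_n) (b : 'I_n -> 'I_N.+1)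
  (t : 'I_N.+1) (y : 'cV[F]_n) : Prop :=
  exists z, [/\ inFilt b t z, D *m z = 0 & y = Fm *m z].

Definition boundaries (n N : nat) (D' : 'M[F]_n) (b' : 'I_n -> 'I_N.+1)
  (t : 'I_N.+1) (y : 'cV[F]_n) : Prop :=
  exists w, inFilt b' t w /\ y = D' *m w.

Definition im_homology_has_barcode (n N : nat) (D D' Fm : 'M[F]_n)
  (b b' : 'I_n -> 'I_N.+1) (bars : seq {set 'I_N.+1}) : Prop :=
  subquot_has_barcode (im_cycles D Fm b) (boundaries D' b') bars.

End Defs.

From HB Require Import structures.
From mathcomp Require Import all_boot all_order all_algebra.
Set Implicit Arguments. Unset Strict Implicit. Unset Printing Implicit Defensive.
Import Order.TTheory GRing.Theory Num.Theory.
Local Open Scope ring_scope.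

(* Pivot reduction shows that the cycles of C_t are spanned by the r^phi_j
   and by the v_i with r_i = 0 and i \notin pivs R^phi that lie in C_t: the
   pivot of a cycle is either a pivot of R^phi or, R = D V being reduced, the
   index of a zero column of R.  Since phi r^phi_j = D' v^phi_j, such a
   generator becomes a boundary of C'_t exactly when v^phi_j lies in C'_t,
   and phi^-1 of the boundaries of C'_t is spanned by those r^phi_j.  All
   these vectors have pairwise distinct pivots, hence are independent, so
   the images of the generators alive at t form a basis of im H(phi_t). *)

Section Pivots.
Variables (F : fieldType) (n : nat).
Implicit Types (x : 'cV[F]_n) (X : 'M[F]_n).

(* [piv 0 = 0] is a junk value: pivots are only ever taken of nonzero vectors. *)
Definition piv x : nat := \max_(i | x i 0 != 0) i.

Lemma leq_piv x (i : 'I_n) : x i 0 != 0 -> (i <= piv x)%N.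
Proof.
exact: (@leq_bigmax_cond _ (fun i : 'I_n => x i 0 != 0) (fun i => nat_of_ord i)).
Qed.

Lemma entry_gt_piv x (i : 'I_n) : (piv x < i)%N -> x i 0 = 0.
Proof. by apply: contraTeq => /leq_piv; rewrite -leqNgt. Qed.

Lemma piv_entry x : x != 0 -> exists2 i : 'I_n, x i 0 != 0 & piv x = i.
Proof.
case/cV0Pn => i0 xi0; rewrite /piv (bigop.bigmax_eq_arg i0) //.
by case: arg_maxnP => // i xi _; exists i.
Qed.

Lemma is_pivE X j (i : 'I_n) :
  is_piv X j i = (col j X != 0) && (piv (col j X) == i).
Proof.
apply/andP/andP => [[Xij /forallP Xgt] | [Xj /eqP pivE]].
  have Xj : col j X != 0 by apply/cV0Pn; exists i; rewrite mxE.
  split=> //; rewrite eqn_leq leq_piv ?mxE // andbT.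
  have [k Xkj ->] := piv_entry Xj; rewrite leqNgt.
  by move: Xkj; apply: contra => ik; rewrite mxE (implyP (Xgt k)).
have [k Xkj kE] := piv_entry Xj.
have <- : k = i by apply: val_inj; rewrite /= -kE.
split; first by rewrite mxE in Xkj.
apply/forallP => i'; apply/implyP; rewrite -kE => /entry_gt_piv.
by rewrite mxE => ->.
Qed.

Lemma mem_pivs X j (i : 'I_n) :
  col j X != 0 -> piv (col j X) = i -> i \in pivs X.
Proof.
by move=> Xj pivE; rewrite inE; apply/existsP; exists j; rewrite is_pivE Xj pivE eqxx.
Qed.

Lemma reduced_piv_inj X j1 j2 : reduced X -> col j1 X != 0 -> col j2 X != 0 ->
  piv (col j1 X) = piv (col j2 X) -> j1 = j2.
Proof.
move=> redX Xj1 Xj2 pivE; have [i _ pivj1] := piv_entry Xj1.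
by apply: (redX j1 j2 i); rewrite is_pivE ?Xj1 ?Xj2 -?pivE pivj1 eqxx.
Qed.

Lemma piv_free (I : finType) (P : pred I) (w : I -> 'cV[F]_n) (c : I -> F) :
  (forall i1 i2, P i1 -> P i2 -> w i1 != 0 -> w i2 != 0 ->
     piv (w i1) = piv (w i2) -> i1 = i2) ->
  \sum_(i | P i) c i *: w i = 0 -> forall i, P i -> w i != 0 -> c i = 0.
Proof.
move=> piv_inj sum0 i0 Pi0 wi0; apply/eqP; apply: contraT => ci0.
pose Q i := [&& P i, w i != 0 & c i != 0].
case: (@arg_maxnP _ i0 Q (fun i => piv (w i))); first by rewrite /Q Pi0 wi0.
move=> i1 /and3P[Pi1 wi1 ci1] i1_max; have [p wp pE] := piv_entry wi1.
move/matrixP/(_ p 0): sum0; rewrite summxE (bigD1 i1) //= big1 ?addr0 ?mxE.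
  by move/eqP; rewrite mulf_eq0 (negbTE ci1) (negbTE wp).
move=> i /andP[Pi ii1]; rewrite mxE.
have [-> | ci] := eqVneq (c i) 0; first by rewrite mul0r.
have [-> | wi] := eqVneq (w i) 0; first by rewrite mxE mulr0.
have le_i : (piv (w i) <= piv (w i1))%N by apply: i1_max; rewrite /Q Pi wi.
have ne_i : piv (w i) != piv (w i1).
  by apply: contra ii1 => /eqP/piv_inj -> //.
by rewrite entry_gt_piv ?mulr0 // -pE ltn_neqAle ne_i.
Qed.

Lemma piv_free2 (I1 I2 : finType) (P1 : pred I1) (P2 : pred I2)
    (w1 : I1 -> 'cV[F]_n) (w2 : I2 -> 'cV[F]_n) (c1 : I1 -> F) (c2 : I2 -> F) :
  (forall i1 i2, P1 i1 -> P1 i2 -> w1 i1 != 0 -> w1 i2 != 0 ->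
     piv (w1 i1) = piv (w1 i2) -> i1 = i2) ->
  (forall k1 k2, P2 k1 -> P2 k2 -> w2 k1 != 0 -> w2 k2 != 0 ->
     piv (w2 k1) = piv (w2 k2) -> k1 = k2) ->
  (forall i k, P1 i -> P2 k -> w1 i != 0 -> w2 k != 0 ->
     piv (w1 i) != piv (w2 k)) ->
  \sum_(i | P1 i) c1 i *: w1 i = \sum_(k | P2 k) c2 k *: w2 k ->
  forall i, P1 i -> w1 i != 0 -> c1 i = 0.
Proof.
move=> inj1 inj2 piv_ne sumE i P1i w1i.
pose P J := match J with inl i => P1 i | inr k => P2 k end.
pose w J := match J with inl i => w1 i | inr k => w2 k end.
pose c J := match J with inl i => c1 i | inr k => - c2 k end.
apply: (@piv_free _ P w c _ _ (inl i)) => //.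
  move=> [i1|k1] [i2|k2] /= P_1 P_2 w_1 w_2 pivE.
  - by rewrite (inj1 i1 i2).
  - by move: (piv_ne _ _ P_1 P_2 w_1 w_2); rewrite pivE eqxx.
  - by move: (piv_ne _ _ P_2 P_1 w_2 w_1); rewrite pivE eqxx.
  - by rewrite (inj2 k1 k2).
rewrite big_sumType /= sumE.
by under [X in _ + X]eq_bigr do rewrite scaleNr; rewrite sumrN subrr.
Qed.

End Pivots.

Section Matrices.
Variable F : fieldType.

Lemma col_mulmx m n p j (A : 'M[F]_(m, n)) (B : 'M[F]_(n, p)) :
  col j (A *m B) = A *m col j B.
Proof. by rewrite !colE mulmxA. Qed.

Lemma mulmx_sum_col m n (A : 'M[F]_(m, n)) (u : 'cV[F]_n) :
  A *m u = \sum_j u j 0 *: col j A.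
Proof.
apply/matrixP => i k; rewrite ord1 mxE summxE; apply: eq_bigr => j _.
by rewrite !mxE mulrC.
Qed.

Lemma sum_scale_pred1 (I : finType) m (j : I) (a : F) (w : I -> 'cV[F]_m) :
  \sum_i (if i == j then a else 0) *: w i = a *: w j.
Proof. by rewrite (bigD1 j) //= eqxx big1 ?addr0 // => i /negbTE ->; rewrite scale0r. Qed.

Variable n : nat.
Implicit Types (M V : 'M[F]_n) (z w : 'cV[F]_n).

Lemma elim_top_entry z w (K : 'I_n) :
  (forall i : 'I_n, (K < i)%N -> z i 0 = 0) ->
  (forall i : 'I_n, (K < i)%N -> w i 0 = 0) -> w K 0 != 0 ->
  forall i : 'I_n, (K <= i)%N -> (z - (z K 0 / w K 0) *: w) i 0 = 0.
Proof.
move=> zgt wgt wK i; rewrite leq_eqVlt => /orP[/eqP/val_inj <- | Ki]; rewrite !mxE.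
  by rewrite divfK // subrr.
by rewrite (zgt i) // (wgt i) // mulr0 subrr.
Qed.

Lemma utri_diag_neq0 V : upper_triangular V -> V \in unitmx -> forall i, V i i != 0.
Proof.
move=> utV; rewrite unitmxE unitfE -det_tr det_trig.
  by move/prodf_neq0 => V_neq0 i; move: (V_neq0 i isT); rewrite mxE.
by apply/is_trig_mxP => i j lt_ij; rewrite mxE utV.
Qed.

Lemma utri_mulmx_vanish (Q : pred 'I_n) M z :
  (forall i j : 'I_n, (i <= j)%N -> Q j -> Q i) -> upper_triangular M ->
  (forall i, ~~ Q i -> z i 0 = 0) -> forall i, ~~ Q i -> (M *m z) i 0 = 0.
Proof.
move=> Qdown utM zQ i Qi; rewrite mxE big1 // => l _.
case: (ltnP l i) => [li | il]; first by rewrite utM ?mul0r.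
by rewrite zQ ?mulr0 //; apply: contra Qi; apply: Qdown il.
Qed.

Lemma utri_mulmx_entry M z (p : 'I_n) : upper_triangular M ->
  (forall l : 'I_n, (p < l)%N -> z l 0 = 0) -> (M *m z) p 0 = M p p * z p 0.
Proof.
move=> utM zgt; rewrite mxE (bigD1 p) //= big1 ?addr0 // => l lp.
case: (ltngtP l p) => [l_p | p_l | /val_inj l_p]; first by rewrite utM ?mul0r.
  by rewrite zgt ?mulr0.
by rewrite l_p eqxx in lp.
Qed.

Lemma utri_invmx V : upper_triangular V -> V \in unitmx ->
  upper_triangular (invmx V).
Proof.
(* The pivot p >= i of column j of invmx V survives multiplication by V,
   yet (V *m invmx V) p j = 0 as p > j. *)
move=> utV uV i j ji; apply/eqP; apply: contraT => Wij.
have Wj : col j (invmx V) != 0 by apply/cV0Pn; exists i; rewrite mxE.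
have [p Wpj pE] := piv_entry Wj.
have ip : (i <= p)%N by rewrite -pE leq_piv ?mxE.
have : (V *m col j (invmx V)) p 0 = V p p * col j (invmx V) p 0.
  by apply: utri_mulmx_entry => // l; rewrite -pE; apply: entry_gt_piv.
have /negbTE pj : p != j by rewrite -(inj_eq val_inj) gtn_eqF // (leq_trans ji ip).
rewrite -col_mulmx mulmxV // !mxE pj mulr0n.
move/esym/eqP; rewrite mulf_eq0 (negbTE (utri_diag_neq0 utV uV p)).
by rewrite mxE in Wpj; rewrite (negbTE Wpj).
Qed.

Lemma piv_col_utri M i : upper_triangular M -> M i i != 0 -> piv (col i M) = i.
Proof.
move=> utM Mii; have Mi : col i M != 0 by apply/cV0Pn; exists i; rewrite mxE.
apply/eqP; rewrite eqn_leq leq_piv ?mxE // andbT.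
have [k Mki ->] := piv_entry Mi; rewrite leqNgt.
by move: Mki; apply: contra => ik; rewrite mxE utM.
Qed.

End Matrices.

Section Filtrations.
Variables (F : fieldType) (N n : nat) (c : 'I_n -> 'I_N.+1).
Implicit Types (x : 'cV[F]_n) (s t : 'I_N.+1).

Lemma inFiltP t x : reflect (forall i, (t < c i)%N -> x i 0 = 0) (inFilt c t x).
Proof.
apply: (iffP forallP) => x_t i; last by apply/implyP => /x_t ->.
by move=> ti; apply/eqP; apply: (implyP (x_t i)).
Qed.

Lemma inFilt_submod_closed t : GRing.submod_closed (inFilt c t : {pred 'cV[F]_n}).
Proof.
split=> [|a x y /inFiltP x_t /inFiltP y_t]; apply/inFiltP => i ti; rewrite !mxE //.
by rewrite x_t ?y_t ?mulr0 ?addr0.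
Qed.

HB.instance Definition _ t :=
  GRing.isSubmodClosed.Build F 'cV[F]_n (inFilt c t) (inFilt_submod_closed t).

Lemma supp_mono s t x : (s <= t)%N -> s \in supp c x -> t \in supp c x.
Proof.
rewrite !inE => st /inFiltP x_s; apply/inFiltP => i ti.
by apply: x_s; apply: leq_ltn_trans ti.
Qed.

Hypothesis c_mono : forall i j : 'I_n, (i <= j)%N -> (c i <= c j)%N.

Lemma inFilt_mulmx_utri t (M : 'M[F]_n) x :
  upper_triangular M -> inFilt c t x -> inFilt c t (M *m x).
Proof.
move=> utM /inFiltP x_t; apply/inFiltP => i; rewrite ltnNge.
apply: (utri_mulmx_vanish (Q := fun i => (c i <= t)%N)) => // [k l kl lt|k].
  exact: leq_trans (c_mono kl) lt.
by rewrite -ltnNge => /x_t.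
Qed.

Lemma inFilt_vanish_gt t x (K : 'I_n) :
  (forall i : 'I_n, (K < i)%N -> x i 0 = 0) -> (c K <= t)%N -> inFilt c t x.
Proof.
move=> xgt cK; apply/inFiltP => i ti; apply: xgt; rewrite ltnNge.
by apply: contraL ti => /c_mono/leq_trans/(_ cK); rewrite -leqNgt.
Qed.

Lemma inFilt_col_utri t (M : 'M[F]_n) j :
  upper_triangular M -> M j j != 0 -> inFilt c t (col j M) = (c j <= t)%N.
Proof.
move=> utM Mjj; apply/idP/idP => [/inFiltP Mj_t | cj].
  by rewrite leqNgt; apply: contra Mjj => /Mj_t; rewrite mxE => ->.
by apply: inFilt_vanish_gt cj => i ji; rewrite mxE utM.
Qed.

End Filtrations.

Section Intervals.
Variable N : nat.
Implicit Types X Y : {set 'I_N.+1}.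

Definition up_closed X := forall s t : 'I_N.+1, (s <= t)%N -> s \in X -> t \in X.

Lemma up_closed_interval X : up_closed X -> is_interval X.
Proof. by move=> X_up s u t su _ Xs _; apply: X_up su Xs. Qed.

Lemma is_interval_setD X Y : up_closed X -> up_closed Y -> is_interval (X :\: Y).
Proof.
move=> X_up Y_up s u t su ut; rewrite !in_setD => /andP[_ Xs] /andP[Yt _].
by rewrite (X_up _ _ su Xs) andbT; apply: contra Yt; apply: Y_up ut.
Qed.

End Intervals.

(* The representatives of [subquot_has_barcode] are taken constant in t. *)
Section GeneratorBarcode.
Variables (F : fieldType) (m N : nat) (A B : 'I_N.+1 -> 'cV[F]_m -> Prop).
Variables (I : finType) (P : {pred I}) (bar : I -> {set 'I_N.+1}).
Variable y : I -> 'cV[F]_m.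
Hypotheses
  (B0 : forall t, B t 0)
  (bar_interval : forall i, i \in P -> is_interval (bar i))
  (y_rep : forall i t, i \in P -> t \in bar i ->
     exists u v, [/\ A t u, B t v & y i = u + v])
  (y_free : forall t (c : I -> F), B t (\sum_(i in P | t \in bar i) c i *: y i) ->
     forall i, i \in P -> t \in bar i -> c i = 0)
  (y_span : forall t u v, A t u -> B t v ->
     exists c : I -> F, B t (u + v - \sum_(i in P | t \in bar i) c i *: y i))
  (y_exit : forall i (s t : 'I_N.+1), i \in P -> (s <= t)%N ->
     s \in bar i -> t \notin bar i -> B t (y i)).

Lemma subquot_has_barcode_image : subquot_has_barcode A B (image bar P).
Proof.
pose e a := enum_val (cast_ord (size_image bar P) a).
have eP a : e a \in P := enum_valP _.
have barE (a : 'I__) : nth set0 (image bar P) a = bar (e a) :=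
  nth_image set0 bar (cast_ord (size_image bar P) a).
have e_inj : injective e by move=> a1 a2 /enum_val_inj/cast_ord_inj.
have sum_e (Q : pred I) (c : I -> F) :
    \sum_(a | Q (e a)) c (e a) *: y (e a) = \sum_(i in P | Q i) c i *: y i.
  rewrite (big_enum_val_cond Q) (reindex (cast_ord (size_image bar P))) //.
  apply: onW_bij; exists (cast_ord (esym (size_image bar P))).
    exact: cast_ordK.
  exact: cast_ordKV.
split=> [_ /imageP[i Pi ->] | ]; first exact: bar_interval.
exists (fun a _ => y (e a)); split.
- by move=> a t; rewrite barE; apply: y_rep.
- move=> t c; pose c' i := \sum_(a | e a == i) c a.
  have c'E a : c' (e a) = c a by rewrite /c' (big_pred1 a) // => a'; apply: inj_eq.
  under eq_bigl do rewrite barE; under eq_bigr do rewrite -c'E.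
  rewrite (sum_e (fun i => t \in bar i)) => /y_free c'0 a.
  by rewrite barE -c'E; apply: c'0.
- move=> t u v /y_span/[apply] -[c Bt]; exists (fun a => c (e a)).
  by under eq_bigl do rewrite barE; rewrite (sum_e (fun i => t \in bar i)).
- move=> a s t st; rewrite !barE => s_a.
  by case: ifPn => [_ | t_a]; [rewrite subrr | apply: y_exit s_a t_a].
Qed.

End GeneratorBarcode.

Section CycleSpan.
Variables (F : fieldType) (N n : nat) (D V X : 'M[F]_n) (b : 'I_n -> 'I_N.+1).
Hypotheses (uV : V \in unitmx) (utV : upper_triangular V)
  (redR : reduced (D *m V)) (DX : D *m X = 0)
  (b_mono : forall i j : 'I_n, (i <= j)%N -> (b i <= b j)%N).
Local Notation R := (D *m V).
Implicit Types z w : 'cV[F]_n.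

Lemma cycle_piv_col_eq0 z (K : 'I_n) : D *m z = 0 -> z K 0 != 0 ->
  (forall i : 'I_n, (K < i)%N -> z i 0 = 0) -> col K R = 0.
Proof.
move=> Dz zK zgt; pose a := invmx V *m z.
have Va : V *m a = z by rewrite mulKVmx.
have agt : forall l : 'I_n, (K < l)%N -> a l 0 = 0.
  move=> l; rewrite ltnNge; apply: (utri_mulmx_vanish (Q := fun l => (l <= K)%N)).
  - by move=> i j; apply: leq_trans.
  - exact: utri_invmx.
  - by move=> i; rewrite -ltnNge => /zgt.
have aK : a K 0 != 0.
  by move: zK; rewrite -Va utri_mulmx_entry // mulf_eq0 negb_or => /andP[].
apply/eqP; apply: contraNT aK => RK; apply/eqP.
apply: (piv_free (P := predT) (w := fun l => col l R) (c := fun l => a l 0)) => //.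
  by move=> l1 l2 _ _; apply: reduced_piv_inj.
by rewrite -mulmx_sum_col -mulmxA Va.
Qed.

Variable t : 'I_N.+1.

Definition cycle_span z : Prop :=
  exists alpha beta : 'I_n -> F,
  [/\ z = \sum_j alpha j *: col j X + \sum_i beta i *: col i V,
      forall j, alpha j != 0 -> col j X != 0 /\ inFilt b t (col j X) &
      forall i, beta i != 0 -> [/\ col i R = 0, i \notin pivs X & (b i <= t)%N]].

Lemma cycle_span0 : cycle_span 0.
Proof.
exists (fun=> 0), (fun=> 0); split=> [|j|i]; rewrite ?eqxx //.
by rewrite !big1 ?addr0 // => i _; rewrite scale0r.
Qed.

Lemma cycle_span_addX z (a : F) j : col j X != 0 -> inFilt b t (col j X) ->
  cycle_span z -> cycle_span (z + a *: col j X).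
Proof.
move=> Xj Xj_t [alpha [beta [zE alphaP betaP]]].
exists (fun l => alpha l + if l == j then a else 0), beta; split=> //.
  under eq_bigr do rewrite scalerDl.
  by rewrite big_split /= sum_scale_pred1 zE addrAC.
move=> l; have [-> _ | _] := eqVneq l j; first by [].
by rewrite addr0; apply: alphaP.
Qed.

Lemma cycle_span_addV z (a : F) i : col i R = 0 -> i \notin pivs X -> (b i <= t)%N ->
  cycle_span z -> cycle_span (z + a *: col i V).
Proof.
move=> Ri Xi bi [alpha [beta [zE alphaP betaP]]].
exists alpha, (fun l => beta l + if l == i then a else 0); split=> //.
  under [X in _ = _ + X]eq_bigr do rewrite scalerDl.
  by rewrite big_split /= sum_scale_pred1 zE addrA.
move=> l; have [-> _ | _] := eqVneq l i; first by [].
by rewrite addr0; apply: betaP.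
Qed.

Lemma cycles_span z : inFilt b t z -> D *m z = 0 -> cycle_span z.
Proof.
suff span_ge k : forall z, inFilt b t z -> D *m z = 0 ->
    (forall i : 'I_n, (k <= i)%N -> z i 0 = 0) -> cycle_span z.
  by move=> z_t Dz; apply: (span_ge n) => // i; rewrite leqNgt ltn_ord.
elim: k => [|k IH] {}z z_t Dz zge.
  have -> : z = 0 by apply/matrixP => i j; rewrite ord1 mxE zge.
  exact: cycle_span0.
have [kn | nk] := ltnP k n; last first.
  by apply: IH => // i; rewrite leqNgt (leq_trans (ltn_ord i) nk).
pose K := Ordinal kn; have zgt (i : 'I_n) : (K < i)%N -> z i 0 = 0 := zge i.
have [zK | zK] := eqVneq (z K 0) 0.
  apply: IH => // i; rewrite leq_eqVlt => /orP[/eqP ki | /zgt //].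
  by have -> : i = K by apply: val_inj.
have bK : (b K <= t)%N.
  by rewrite leqNgt; apply: contra zK => tK; apply/eqP; move/inFiltP: z_t; apply.
have elim_K w : w K 0 != 0 -> (forall i : 'I_n, (K < i)%N -> w i 0 = 0) ->
    inFilt b t w -> D *m w = 0 -> cycle_span (z - (z K 0 / w K 0) *: w).
  move=> wK wgt w_t Dw; apply: IH.
  - by apply: rpredB => //; apply: rpredZ.
  - by rewrite mulmxBr Dz -scalemxAr Dw scaler0 subrr.
  - exact: (elim_top_entry zgt wgt wK).
have [KX | KX] := boolP (K \in pivs X).
  move: KX; rewrite inE => /existsP[j /andP[XKj /forallP Xgt]].
  have Xjgt (i : 'I_n) : (K < i)%N -> col j X i 0 = 0.
    by move=> Ki; rewrite mxE; apply/eqP/(implyP (Xgt i)).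
  have Xj_t : inFilt b t (col j X) := inFilt_vanish_gt b_mono Xjgt bK.
  rewrite -[z](subrK ((z K 0 / col j X K 0) *: col j X)).
  apply: cycle_span_addX => //; first by apply/cV0Pn; exists K; rewrite mxE.
  by apply: elim_K; rewrite ?mxE // -col_mulmx DX col0.
have RK : col K R = 0 := cycle_piv_col_eq0 Dz zK zgt.
have Vgt (i : 'I_n) : (K < i)%N -> col K V i 0 = 0 by move=> Ki; rewrite mxE utV.
rewrite -[z](subrK ((z K 0 / col K V K 0) *: col K V)).
apply: cycle_span_addV => //; apply: elim_K => //; first by rewrite mxE utri_diag_neq0.
  by rewrite inFilt_col_utri // utri_diag_neq0.
by rewrite -col_mulmx RK.
Qed.

End CycleSpan.

Lemma boundaries0 (F : fieldType) (N n : nat) (D' : 'M[F]_n) (b' : 'I_n -> 'I_N.+1) t :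
  boundaries D' b' t 0.
Proof. by exists 0; split; [apply: rpred0 | rewrite mulmx0]. Qed.

Section ImageBarcode.
Variables (F : fieldType) (N n : nat) (D D' Fm V Vphi : 'M[F]_n).
Variables (b b' : 'I_n -> 'I_N.+1).
Hypotheses (DD : D *m D = 0) (FmD : Fm *m D = D' *m Fm) (uFm : Fm \in unitmx)
  (uV : V \in unitmx) (utV : upper_triangular V)
  (uVphi : Vphi \in unitmx) (utVphi : upper_triangular Vphi)
  (redR : reduced (D *m V)) (redRphi : reduced (D *m invmx Fm *m Vphi))
  (b_mono : forall i j : 'I_n, (i <= j)%N -> (b i <= b j)%N)
  (b'_mono : forall i j : 'I_n, (i <= j)%N -> (b' i <= b' j)%N).
Local Notation R := (D *m V).
Local Notation Rphi := (D *m invmx Fm *m Vphi).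

Lemma D_Rphi : D *m Rphi = 0.
Proof. by rewrite !mulmxA DD !mul0mx. Qed.

Lemma Fm_Rphi j : Fm *m col j Rphi = D' *m col j Vphi.
Proof. by rewrite -!col_mulmx !mulmxA FmD -(mulmxA D') mulmxV // mulmx1. Qed.

Lemma invFm_D' : invmx Fm *m D' = D *m invmx Fm.
Proof. by apply: (canLR (mulKmx uFm)); rewrite mulmxA FmD -mulmxA mulmxV // mulmx1. Qed.

Definition generator (J : 'I_n + 'I_n) : 'cV[F]_n :=
  match J with inl j => col j Rphi | inr i => col i V end.

Definition generator_bar (J : 'I_n + 'I_n) : {set 'I_N.+1} :=
  match J with
  | inl j => supp b (col j Rphi) :\: supp b' (col j Vphi)
  | inr i => supp b (col i V)
  end.

Definition essential : {pred 'I_n + 'I_n} := [pred J |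
  match J with
  | inl j => (col j Rphi != 0) && (generator_bar (inl j) != set0)
  | inr i => (col i R == 0) && (i \notin pivs Rphi)
  end].

Lemma image_generator_bar : image generator_bar essential =
  [seq supp b (col j Rphi) :\: supp b' (col j Vphi) |
     j <- enum 'I_n & (col j Rphi != 0)
                      && (supp b (col j Rphi) :\: supp b' (col j Vphi) != set0)]
  ++ [seq supp b (col i V) | i <- enum 'I_n & (col i R == 0) && (i \notin pivs Rphi)].
Proof.
rewrite /image_mem /enum_mem [@Finite.enum in LHS]unlock /= filter_cat map_cat.
by rewrite !filter_map -!map_comp -!enumT.
Qed.

Lemma generator_bar_interval J : is_interval (generator_bar J).
Proof.
by case: J => [j|i] /=; [apply: is_interval_setD | apply: up_closed_interval];
  move=> s t; apply: supp_mono.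
Qed.

Lemma generator_inFilt J t : t \in generator_bar J -> inFilt b t (generator J).
Proof. by case: J => [j|i] /=; rewrite ?in_setD !inE // => /andP[]. Qed.

Lemma generator_cycle J : J \in essential -> D *m generator J = 0.
Proof.
case: J => [j|i]; rewrite inE /= -col_mulmx; first by rewrite D_Rphi col0.
by case/andP => /eqP.
Qed.

Lemma generator_neq0 J : J \in essential -> generator J != 0.
Proof.
case: J => [j|i]; rewrite inE /=; first by case/andP.
by move=> _; apply/cV0Pn; exists i; rewrite mxE utri_diag_neq0.
Qed.

Lemma generator_piv_inj J1 J2 : J1 \in essential -> J2 \in essential ->
  piv (generator J1) = piv (generator J2) -> J1 = J2.
Proof.
have pivV i : piv (col i V) = i := piv_col_utri utV (utri_diag_neq0 utV uV i).
case: J1 J2 => [j1|i1] [j2|i2]; rewrite ![_ \in essential]inE /=.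
- by move=> /andP[Rj1 _] /andP[Rj2 _] /(reduced_piv_inj redRphi Rj1 Rj2) ->.
- move=> /andP[Rj1 _] /andP[_ /negP Xi2] pivE; case: Xi2.
  by apply: (mem_pivs Rj1); rewrite pivE pivV.
- move=> /andP[_ /negP Xi1] /andP[Rj2 _] pivE; case: Xi1.
  by apply: (mem_pivs Rj2); rewrite -pivE pivV.
- by move=> _ _; rewrite !pivV => /val_inj ->.
Qed.

Lemma generator_rep J t : J \in essential -> t \in generator_bar J ->
  exists u v, [/\ im_cycles D Fm b t u, boundaries D' b' t v & Fm *m generator J = u + v].
Proof.
move=> J_ess J_t; exists (Fm *m generator J), 0; split; last by rewrite addr0.
  by exists (generator J); split; [apply: generator_inFilt | apply: generator_cycle |].
exact: boundaries0.
Qed.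

Lemma generator_exit J (s t : 'I_N.+1) : J \in essential -> (s <= t)%N ->
  s \in generator_bar J -> t \notin generator_bar J ->
  boundaries D' b' t (Fm *m generator J).
Proof.
case: J => [j|i] _ st /=; last by move/(supp_mono st) ->.
rewrite !in_setD => /andP[_ /(supp_mono st) ->]; rewrite andbT negbK inE => Vj_t.
by exists (col j Vphi); rewrite Fm_Rphi.
Qed.

Lemma inl_active j t : col j Rphi != 0 -> inFilt b t (col j Rphi) ->
  (inl j \in essential) && (t \in generator_bar (inl j)) = ~~ (b' j <= t)%N.
Proof.
move=> Rj Rj_t; have bar_t : (t \in generator_bar (inl j)) = ~~ (b' j <= t)%N.
  by rewrite in_setD !inE Rj_t inFilt_col_utri ?andbT // utri_diag_neq0.
rewrite bar_t inE /= Rj andbC; case: leqP => //= tj.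
by apply/set0Pn; exists t; rewrite bar_t -ltnNge.
Qed.

Lemma inr_active i t : col i R = 0 -> i \notin pivs Rphi ->
  (inr i \in essential) && (t \in generator_bar (inr i)) = (b i <= t)%N.
Proof.
move=> Ri Xi; rewrite [_ \in essential]inE /= Ri eqxx Xi inE.
by rewrite inFilt_col_utri // utri_diag_neq0.
Qed.

Definition generator_coef (alpha beta : 'I_n -> F) (J : 'I_n + 'I_n) : F :=
  match J with inl j => alpha j | inr i => beta i end.

Lemma generator_span t u v : im_cycles D Fm b t u -> boundaries D' b' t v ->
  exists c, boundaries D' b' t
    (u + v - \sum_(J in essential | t \in generator_bar J) c J *: (Fm *m generator J)).
Proof.
move=> [z [z_t Dz ->]] [w [w_t ->]].
have [alpha [beta [zE alphaP betaP]]] := cycles_span uV utV redR D_Rphi b_mono z_t Dz.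
exists (generator_coef alpha beta).
pose S_in := \sum_(j | (b' j <= t)%N) alpha j *: col j Rphi.
pose S_out := \sum_(j | ~~ (b' j <= t)%N) alpha j *: col j Rphi + \sum_i beta i *: col i V.
have active_sum : \sum_(J in essential | t \in generator_bar J)
    generator_coef alpha beta J *: generator J = S_out.
  rewrite big_sumType /=; congr (_ + _).
    rewrite big_mkcond [RHS]big_mkcond; apply: eq_bigr => j _.
    have [-> | /alphaP[Rj Rj_t]] := eqVneq (alpha j) 0; first by rewrite scale0r !if_same.
    by rewrite inl_active.
  rewrite big_mkcond; apply: eq_bigr => i _.
  have [-> | /betaP[Ri Xi bi]] := eqVneq (beta i) 0; first by rewrite scale0r if_same.
  by rewrite inr_active ?bi.
pose w_in := \sum_(j | (b' j <= t)%N) alpha j *: col j Vphi.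
have Fm_S_in : Fm *m S_in = D' *m w_in.
  by rewrite !mulmx_sumr; apply: eq_bigr => j _; rewrite -!scalemxAr Fm_Rphi.
have {}zE : z = S_in + S_out by rewrite zE (bigID (fun j => (b' j <= t)%N)) addrA.
exists (w + w_in); split.
  apply: rpredD => //; apply: rpred_sum => j bj; apply: rpredZ.
  by move: bj; rewrite -(inFilt_col_utri b'_mono t utVphi) ?utri_diag_neq0.
under eq_bigr do rewrite scalemxAr.
by rewrite -mulmx_sumr active_sum zE !mulmxDr Fm_S_in addrAC addrK addrC.
Qed.

Lemma generator_free t (c : 'I_n + 'I_n -> F) :
  boundaries D' b' t
    (\sum_(J in essential | t \in generator_bar J) c J *: (Fm *m generator J)) ->
  forall J, J \in essential -> t \in generator_bar J -> c J = 0.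
Proof.
move=> [w [w_t sumE]] J J_ess J_t.
have /inFiltP u_t := inFilt_mulmx_utri b'_mono (utri_invmx utVphi uVphi) w_t.
have sum_gen : \sum_(J in essential | t \in generator_bar J) c J *: generator J
    = \sum_(j | (b' j <= t)%N) (invmx Vphi *m w) j 0 *: col j Rphi.
  transitivity (Rphi *m (invmx Vphi *m w)).
    rewrite -[LHS](mulKmx uFm) mulmx_sumr; under eq_bigr do rewrite -scalemxAr.
    by rewrite sumE mulmxA invFm_D' -!mulmxA mulKVmx.
  rewrite mulmx_sum_col (bigID (fun j => (b' j <= t)%N)) /=.
  by rewrite [X in _ + X]big1 ?addr0 // => j; rewrite -ltnNge => /u_t ->; rewrite scale0r.
apply: (piv_free2 _ _ _ sum_gen); last 2 first.
- by rewrite J_ess.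
- exact: generator_neq0.
- by move=> J1 J2 /andP[J1_ess _] /andP[J2_ess _] _ _; apply: generator_piv_inj.
- by move=> j1 j2 _ _; apply: reduced_piv_inj.
move=> [j'|i] j /andP[]; rewrite inE /= => J'_ess J'_t bj _ Rj; apply/eqP => pivE.
  case/andP: J'_ess => Rj' _; move: J'_t.
  rewrite (reduced_piv_inj redRphi Rj' Rj pivE) in_setD !inE.
  by rewrite inFilt_col_utri ?bj // utri_diag_neq0.
case/andP: J'_ess => _ /negP[]; apply: (mem_pivs Rj).
by rewrite -pivE piv_col_utri // utri_diag_neq0.
Qed.

Lemma im_homology_has_barcode_generators :
  im_homology_has_barcode D D' Fm b b' (image generator_bar essential).
Proof.
apply: subquot_has_barcode_image.
- exact: boundaries0.
- by move=> J _; apply: generator_bar_interval.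
- exact: generator_rep.
- exact: generator_free.
- exact: generator_span.
- exact: generator_exit.
Qed.

End ImageBarcode.

Theorem theorem3p6 (F : fieldType) (N n : nat)
  (D D' Fm V Vphi : 'M[F]_n) (deg deg' : 'I_n -> int)
  (b b' : 'I_n -> 'I_N.+1) :
  filt_chain_complex D deg b ->
  filt_chain_complex D' deg' b' ->
  filt_chain_map D D' Fm deg deg' b b' ->
  Fm \in unitmx ->
  V \in unitmx -> upper_triangular V ->
  Vphi \in unitmx -> upper_triangular Vphi ->
  let Dphi := D *m invmx Fm in
  let R := D *m V in
  let Rphi := Dphi *m Vphi in
  reduced R -> reduced Rphi ->
  im_homology_has_barcode D D' Fm b b'
    ([seq supp b (col j Rphi) :\: supp b' (col j Vphi) |
        j <- enum 'I_n & (col j Rphi != 0)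
                         && (supp b (col j Rphi) :\: supp b' (col j Vphi) != set0)]
     ++ [seq supp b (col i V) |
        i <- enum 'I_n & (col i R == 0) && (i \notin pivs Rphi)]).
Proof.
move=> [DD _ _ b_mono] [_ _ _ b'_mono] [FmD _ _] uFm uV utV uVphi utVphi.
move=> Dphi R Rphi redR redRphi; rewrite -image_generator_bar.
exact: im_homology_has_barcode_generators.
Qed.
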